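(* Let $N\ge2$, $x_1>\cdots>x_N$ real, and $\mathbf A\in\mathbb R^{N\times N}$ with $\mathbf A_{i,n}=|x_i-x_n|$. Then $\mathbf A$ is invertible and $\mathbf A^{-1}=\frac12\mathbf P\mathbf E\mathbf D\mathbf E$, where $$\mathbf P=\begin{pmatrix}\mathbf 0^T & 1\\ I_{N-1} & \mathbf 0\end{pmatrix},\qquad \mathbf E=\begin{pmatrix}\Delta & -\mathbf e\\ -\mathbf e_1^T & -1\end{pmatrix},$$ $\mathbf D\in\mathbb R^{N\times N}$ is diagonal with $\mathbf D_{i,i}=\frac1{x_i-x_{i+1}}$ for $i\in[N-1]$ and $\mathbf D_{N,N}=\frac1{x_1-x_N}$, $\mathbf 0\in\mathbb R^{N-1}$ is the zero vector, $\mathbf e=(0,\dots,0,1)^T\in\mathbb R^{N-1}$ and $\mathbf e_1=(1,0,\dots,0)^T\in\mathbb R^{N-1}$.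
   Context: $\Delta\in\mathbb R^{(N-1)\times(N-1)}$ is the finite difference matrix with $\Delta_{i,i}=1$, $\Delta_{i,i+1}=-1$, and all other entries $0$; $I_{N-1}$ is the identity matrix. *)

From HB Require Import structures.
From mathcomp Require Import all_boot all_order all_algebra.
Set Implicit Arguments. Unset Strict Implicit. Unset Printing Implicit Defensive.
Import Order.TTheory GRing.Theory Num.Theory.
Local Open Scope ring_scope.

(* Indices are 0-based: the paper's index i (1..N) is our i-1 (0..N-1). *)

Definition distmx (R : realFieldType) (N : nat) (x : 'I_N -> R) : 'M[R]_N :=
  \matrix_(i < N, j < N) `|x i - x j|.

(* P = [ 0^T 1 ; I_{N-1} 0 ] *)
Definition Pmx (R : realFieldType) (N : nat) : 'M[R]_N :=
  \matrix_(i < N, j < N)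
    (if (i : nat) == 0%N then ((j : nat) == N.-1)%:R
     else (((j : nat) == i.-1) && ((j : nat) < N.-1)%N)%:R).

(* E = [ Delta  -e ; -e_1^T  -1 ], Delta_{i,i}=1, Delta_{i,i+1}=-1 *)
Definition Emx (R : realFieldType) (N : nat) : 'M[R]_N :=
  \matrix_(i < N, j < N)
    (if ((i : nat) < N.-1)%N then
       (if ((j : nat) < N.-1)%N
        then ((j : nat) == i)%:R - ((j : nat) == i.+1)%:R
        else - ((i : nat) == N.-2)%:R)
     else
       (if ((j : nat) < N.-1)%N then - ((j : nat) == 0%N)%:R else -1)).

Definition Dmx (R : realFieldType) (n : nat) (x : 'I_n.+2 -> R) : 'M[R]_n.+2 :=
  \matrix_(i < n.+2, j < n.+2)
    (if i == j then
       (if ((i : nat) < n.+1)%N then (x i - x (inord (i : nat).+1))^-1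
        else (x ord0 - x ord_max)^-1)
     else 0).

From HB Require Import structures.
From mathcomp Require Import all_boot all_order all_algebra zify ring.
Import Order.TTheory GRing.Theory Num.Theory.
Local Open Scope ring_scope.

(* With 0-based indices, P shifts columns cyclically, (M P)_{ij} = M_{i,j+1 mod N},
   and (M E)_{ij} = s_j M_{ij} - M_{i,j-1 mod N}, where s_j = -1 on the last column
   only.  So for decreasing x, column j < N-1 of A P E is
   |x_i - x_{j+1}| - |x_i - x_j| = +-(x_j - x_{j+1}), positive exactly when i <= j,
   and its last column is -(|x_i - x_0| + |x_i - x_{N-1}|) = x_{N-1} - x_0.  Hence
   A P E D is the sign pattern S_{ij} = (1 if i <= j < N-1, else -1), and S E = 2 I
   because E takes the cyclic differences of consecutive columns of S. *)

Lemma ordS_val n (j : 'I_n.+1) : val (ordS j) = (if (j < n)%N then j.+1 else 0)%N.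
Proof.
case: (ltnP j n) => hj /=; first by rewrite modn_small.
by rewrite (_ : j.+1 = n.+1) ?modnn //; have := ltn_ord j; lia.
Qed.

Lemma ord_pred_val n (j : 'I_n.+1) :
  val (ord_pred j) = (if (j : nat) == 0 then n else j.-1)%N.
Proof.
rewrite /=; case: eqP => [-> | hj] //=; first by rewrite modn_small.
rewrite (_ : (j + n.+1).-1 = j.-1 + n.+1)%N ?modnDr ?modn_small //.
all: by have := ltn_ord j; lia.
Qed.

Lemma sum_mul_natr_eq (R : pzSemiRingType) (I : finType) (F : I -> R) (a : I) :
  \sum_k F k * (k == a)%:R = F a.
Proof. by under eq_bigr do rewrite mulr_natr mulrb; rewrite -big_mkcond big_pred1_eq. Qed.

Lemma Pmx_ordS (R : realFieldType) n (k j : 'I_n.+1) :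
  Pmx R n.+1 k j = (k == ordS j)%:R.
Proof.
rewrite mxE -val_eqE ordS_val /=; have := ltn_ord j; have := ltn_ord k.
by do ! case: ifP; do ! case: eqP => //=; lia.
Qed.

Lemma mulmx_Pmx (R : realFieldType) m n (M : 'M[R]_(m, n.+1)) i j :
  (M *m Pmx R n.+1) i j = M i (ordS j).
Proof. by rewrite mxE; under eq_bigr do rewrite Pmx_ordS; rewrite sum_mul_natr_eq. Qed.

Section SignMatrices.
Variables (R : realFieldType) (n : nat).

Lemma Emx_ord_pred (k j : 'I_n.+2) :
  Emx R n.+2 k j = (-1) ^+ (j == ord_max) * (k == j)%:R - (k == ord_pred j)%:R.
Proof.
rewrite mxE -!val_eqE ord_pred_val /=; have := ltn_ord j; have := ltn_ord k.
by do ! case: ifP; do ! case: eqP => //= *; try lia; ring.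
Qed.

Lemma mulmx_Emx m (M : 'M[R]_(m, n.+2)) i j :
  (M *m Emx R n.+2) i j = (-1) ^+ (j == ord_max) * M i j - M i (ord_pred j).
Proof.
rewrite mxE; under eq_bigr do rewrite Emx_ord_pred mulrBr mulrCA.
by rewrite sumrB -mulr_sumr !sum_mul_natr_eq.
Qed.

Definition upper_sign_mx : 'M[R]_n.+2 :=
  \matrix_(i, j) if (i <= j < n.+1)%N then 1 else -1.

Lemma upper_sign_mx_Emx : upper_sign_mx *m Emx R n.+2 = 2%:M.
Proof.
apply/matrixP => i j; rewrite mulmx_Emx !mxE -!val_eqE ord_pred_val /=.
have := ltn_ord j; have := ltn_ord i.
by do ! case: ifP; do ! case: eqP => //= *; try lia; ring.
Qed.

End SignMatrices.

Lemma Dmx_diag (R : realFieldType) n (x : 'I_n.+2 -> R) :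
  Dmx x = diag_mx (\row_j ((-1) ^+ (j == ord_max) / (x j - x (ordS j)))).
Proof.
apply/matrixP => j k; rewrite !mxE; have [_ | //] := eqVneq j k; rewrite mulr1n.
have [hj | hj] := ltnP j n.+1.
- have -> : inord j.+1 = ordS j by apply/val_inj; rewrite ordS_val hj /= inordK.
  by rewrite (_ : j == ord_max = false) ?mul1r //; exact: ltn_eqF.
- have -> : j = ord_max by apply/val_inj; have := ltn_ord j; rewrite /=; lia.
  have -> : ordS (@ord_max n.+1) = ord0 by apply/val_inj; rewrite ordS_val ltnn.
  by rewrite eqxx expr1 mulN1r -invrN opprB.
Qed.

Section DistanceDifferences.
Variables (R : realDomainType) (a b t : R).
Hypothesis b_le_a : b <= a.

Lemma normB_sub_normB_above : a <= t -> `|t - b| - `|t - a| = a - b.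
Proof. by move=> a_le_t; rewrite !ger0_norm ?subr_ge0 ?(le_trans b_le_a) //; ring. Qed.

Lemma normB_sub_normB_below : t <= b -> `|t - b| - `|t - a| = b - a.
Proof.
move=> t_le_b; rewrite !ler0_norm ?subr_le0 ?(le_trans t_le_b) //; ring.
Qed.

Lemma normB_add_normB_between : b <= t <= a -> `|t - a| + `|t - b| = a - b.
Proof.
by case/andP=> b_le_t t_le_a; rewrite ler0_norm ?ger0_norm ?subr_ge0 ?subr_le0 //; ring.
Qed.

End DistanceDifferences.

Section DecreasingPoints.
Variables (R : realFieldType) (n : nat) (x : 'I_n.+2 -> R).
Hypothesis x_decr : forall i j : 'I_n.+2, (i < j)%N -> x j < x i.

Lemma decr_le (i j : 'I_n.+2) : (i <= j)%N -> x j <= x i.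
Proof. by rewrite leq_eqVlt => /orP[/eqP/val_inj -> // | /x_decr/ltW]. Qed.

Lemma decr_subr_ordS_neq0 (j : 'I_n.+2) : x j - x (ordS j) != 0.
Proof.
rewrite subr_eq0; have [hj | hj] := ltnP j n.+1.
- by rewrite gt_eqF // x_decr // ordS_val hj.
- have hS : val (ordS j) = 0 by rewrite ordS_val ltnNge hj.
  by rewrite lt_eqF // x_decr // hS; have := ltn_ord j; lia.
Qed.

Lemma distmx_Pmx_Emx (i j : 'I_n.+2) :
  (distmx x *m Pmx R n.+2 *m Emx R n.+2) i j =
  (if (i <= j)%N then 1 else -1) * (x j - x (ordS j)).
Proof.
rewrite mulmx_Emx !mulmx_Pmx ord_predK !mxE.
have [hj | hj] := ltnP j n.+1.
- rewrite (_ : j == ord_max = false) ?mul1r; last exact: ltn_eqF.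
  have hS : val (ordS j) = j.+1 by rewrite ordS_val hj.
  have [hij | hji] := leqP i j; rewrite ?mul1r ?mulN1r.
  + by rewrite normB_sub_normB_above //; apply: decr_le; rewrite ?hS.
  + by rewrite normB_sub_normB_below ?opprB //; apply: decr_le; rewrite ?hS.
- have ej : j = ord_max by apply/val_inj; have := ltn_ord j; rewrite /=; lia.
  have e0 : ordS j = ord0 by apply/val_inj; rewrite ordS_val ltnNge hj.
  rewrite e0 ej eqxx expr1 leq_ord mulN1r mul1r -opprD.
  by rewrite normB_add_normB_between ?opprB // !decr_le ?leq_ord.
Qed.

Lemma distmx_Pmx_Emx_Dmx :
  distmx x *m Pmx R n.+2 *m Emx R n.+2 *m Dmx x = upper_sign_mx R n.
Proof.
apply/matrixP => i j; rewrite Dmx_diag mul_mx_diag mxE distmx_Pmx_Emx !mxE.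
rewrite mulrACA divff ?decr_subr_ordS_neq0 // mulr1 -val_eqE /=.
have := ltn_ord i; have := ltn_ord j.
by do ! case: ifP; do ! case: eqP => //= *; try lia; ring.
Qed.

End DecreasingPoints.

Theorem lemma22 (R : realFieldType) (n : nat) (x : 'I_n.+2 -> R)
  (hx : forall i j : 'I_n.+2, (i < j)%N -> x j < x i) :
  distmx x \in unitmx /\
  invmx (distmx x) = 2^-1 *: (Pmx R n.+2 *m Emx R n.+2 *m Dmx x *m Emx R n.+2).
Proof.
set B := 2^-1 *: _.
have AB : distmx x *m B = 1%:M.
  rewrite -scalemxAr !mulmxA (@distmx_Pmx_Emx_Dmx R n x hx) upper_sign_mx_Emx.
  by rewrite scale_scalar_mx mulVf ?pnatr_eq0.
have [uA _] := mulmx1_unit AB.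
by split; last rewrite -[RHS](mulKmx uA) AB mulmx1.
Qed.
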